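(* The Lie algebra $\Lambda(\mathbb{Q}\mathrm{Par}_2)$ is generated by $1$, $x_1x_2$, $x_1^2x_2$, $x_1x_2^2$, and $x_1^3x_2+x_1x_2^3$.
   Context: The nonsymmetric operad $\mathrm{Par}_2$: $\mathrm{Par}_2((0))=\emptyset$, $\mathrm{Par}_2((1))=\{1\}$, and for $m\ge2$, $\mathrm{Par}_2((m))=\{x_1^ax_2^b: a,b\ge1,a+b=m\}$ (order-preserving partitions of $\{1,\dots,m\}$ into two consecutive blocks of sizes $a,b$). Partial composition: if $x_l$ is the variable whose block contains $s$, then $(x_1^{a_1}x_2^{a_2})\circ_s d$ is obtained by raising the exponent of $x_l$ by $j-1$, where $j$ is the degree of the monomial $d$; $1$ is a two-sided unit. $\Lambda(\mathbb{Q}\mathrm{Par}_2)=\bigoplus_{m\ge1}\mathbb{Q}\mathrm{Par}_2((m))$ with Lie bracket $[c,d]=\sum_{t=1}^{j}d\circ_tc-\sum_{s=1}^{k}c\circ_sd$ for $c$ of arity $k$, $d$ of arity $j$. *)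

From HB Require Import structures.
From mathcomp Require Import all_boot all_order all_algebra.
From mathcomp Require Import finmap monalg.
Set Implicit Arguments. Unset Strict Implicit. Unset Printing Implicit Defensive.
Import GRing.Theory.
Local Open Scope ring_scope.

(* Basis of QPar_2:  None  = the unit 1 (arity 1);
   Some (a, b) = the monomial x_1^(a+1) x_2^(b+1)  (arity a+b+2). *)
Definition par2 := option (nat * nat).

Definition par2_arity (c : par2) : nat :=
  match c with None => 1%N | Some (a, b) => (a + b + 2)%N end.

(* partial composition  c o_s d  (1 <= s <= arity c) *)
Definition par2_comp (c : par2) (s : nat) (d : par2) : par2 :=
  match c with
  | None => d
  | Some (a, b) =>
      let j := par2_arity d in
      if (s <= a.+1)%N then Some ((a + j - 1)%N, b) else Some (a, (b + j - 1)%N)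
  end.

Definition LPar2 := {malg rat[par2]}.

Definition basisv (c : par2) : LPar2 := << 1 *g c >>.

Definition par2_bracketB (c d : par2) : LPar2 :=
  \sum_(t < par2_arity d) basisv (par2_comp d t.+1 c)
  - \sum_(s < par2_arity c) basisv (par2_comp c s.+1 d).

Definition par2_bracket (f g : LPar2) : LPar2 :=
  \sum_(u <- msupp f) \sum_(v <- msupp g) (f@_u * g@_v) *: par2_bracketB u v.

Definition lie_subalgebra (S : LPar2 -> Prop) : Prop :=
  [/\ S 0,
      (forall f g, S f -> S g -> S (f + g)),
      (forall (a : rat) f, S f -> S (a *: f)) &
      (forall f g, S f -> S g -> S (par2_bracket f g))].

Definition lie_generated_by (gens : seq LPar2) : Prop :=
  forall S : LPar2 -> Prop, lie_subalgebra S ->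
    (forall x, x \in gens -> S x) -> forall f, S f.

(* x_1^a x_2^b for a, b >= 1 *)
Definition mono (a b : nat) : LPar2 := basisv (Some (a.-1, b.-1)).

From mathcomp Require Import all_boot all_order all_algebra.
From mathcomp Require Import finmap monalg.
From mathcomp Require Import zify ring.
Set Implicit Arguments. Unset Strict Implicit. Unset Printing Implicit Defensive.
Import GRing.Theory Num.Theory.
Local Open Scope ring_scope.

(* Let S be a Lie subalgebra containing the generators; we show by induction on the degree n
   that S contains every monomial x_1^i x_2^(n-i), which together with 1 span the algebra.
   Bracketing x_1 x_2 with x_1^i x_2^(n-1-i) gives
     i x_1^(i+1) x_2^(n-1-i) + (n-1-i) x_1^i x_2^(n-i) - x_1^(n-1) x_2 - x_1 x_2^(n-1),
   so once the two end monomials x_1 x_2^(n-1) and x_1^(n-1) x_2 lie in S, the whole degree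
   follows by walking from one end to the other.  The ends are obtained from two linearly
   independent combinations of them that are brackets of lower-degree monomials (in degree 4,
   one of them is the generator x_1^3 x_2 + x_1 x_2^3). *)

Lemma scale_basisv (x : rat) c : << x *g c >> = x *: basisv c.
Proof. by apply/malgP=> k; rewrite mcoeffZ !mcoeffU mulr_natr. Qed.

Lemma par2_bracket_basisv c d : par2_bracket (basisv c) (basisv d) = par2_bracketB c d.
Proof.
by rewrite /par2_bracket !msuppU oner_eq0 !big_seq_fset1 !mcoeffUU mulr1 scale1r.
Qed.

Lemma sum_par2_comp_Some a b d :
  \sum_(s < par2_arity (Some (a, b))) basisv (par2_comp (Some (a, b)) s.+1 d) =
  basisv (Some ((a + par2_arity d).-1, b)) *+ a.+1 +
  basisv (Some (a, (b + par2_arity d).-1)) *+ b.+1.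
Proof.
rewrite -(big_mkord xpredT (fun s => basisv (par2_comp _ s.+1 d))).
rewrite (big_cat_nat _ (n := a.+1)) //=; last by lia.
rewrite (eq_big_nat _ _ (F2 := fun=> basisv (Some ((a + par2_arity d).-1, b)))); last first.
  by move=> s /andP[_ lt_s_a] /=; rewrite lt_s_a subn1.
rewrite [X in _ + X](eq_big_nat _ _ (F2 := fun=> basisv (Some (a, (b + par2_arity d).-1)))); last first.
  by move=> s /andP[le_a_s _] /=; rewrite ltnNge le_a_s /= subn1.
rewrite !sumr_const_nat; congr (_ *+ _ + _ *+ _); lia.
Qed.

Lemma par2_bracket_mono a b p q r1 s2 r3 s4 :
  (0 < a)%N -> (0 < b)%N -> (0 < p)%N -> (0 < q)%N ->
  r1 = (a + b + p).-1 -> s2 = (a + b + q).-1 ->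
  r3 = (a + p + q).-1 -> s4 = (b + p + q).-1 ->
  par2_bracket (mono a b) (mono p q) =
  mono r1 q *+ p + mono p s2 *+ q - (mono r3 b *+ a + mono a s4 *+ b).
Proof.
case: a b p q => [|a] [|b] [|p] [|q] // _ _ _ _ -> -> -> ->.
rewrite par2_bracket_basisv /par2_bracketB !sum_par2_comp_Some /mono /par2_arity -!pred_Sn.
have -> : (a.+1 + b.+1 + p.+1).-2 = (p + (a + b + 2)).-1 by lia.
have -> : (a.+1 + b.+1 + q.+1).-2 = (q + (a + b + 2)).-1 by lia.
have -> : (a.+1 + p.+1 + q.+1).-2 = (a + (p + q + 2)).-1 by lia.
by have -> : (b.+1 + p.+1 + q.+1).-2 = (b + (p + q + 2)).-1 by lia.
Qed.

(* The monomials are generalized first: otherwise ring unfolds them into finite maps. *)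
Local Ltac malg_ring :=
  repeat match goal with |- context [mono ?a ?b] =>
    let x := fresh "x" in set x := mono a b; clearbody x end;
  apply/malgP => k; rewrite !(mcoeffD, mcoeffB, mcoeffN, mcoeffZ, mcoeffMn); ring.

Lemma bracket_mono_deg4 :
  par2_bracket (mono 1 1) (mono 2 1) - par2_bracket (mono 1 1) (mono 1 2) =
  - 2%:R *: mono 1 3 + 2%:R *: mono 3 1.
Proof.
rewrite (@par2_bracket_mono 1 1 2 1 3 2 3 3) // (@par2_bracket_mono 1 1 1 2 2 3 3 3) //.
malg_ring.
Qed.

Lemma bracket_mono_deg5_sym :
  par2_bracket (mono 1 1) (mono 2 2) - 2%:R *: par2_bracket (mono 1 1) (mono 1 3)
  - 2%:R *: par2_bracket (mono 1 1) (mono 3 1) =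
  - 3%:R *: mono 1 4 + - 3%:R *: mono 4 1.
Proof.
rewrite (@par2_bracket_mono 1 1 2 2 3 3 4 4) // (@par2_bracket_mono 1 1 1 3 2 4 4 4) //.
rewrite (@par2_bracket_mono 1 1 3 1 4 2 4 4) //.
malg_ring.
Qed.

Lemma bracket_mono_deg5_antisym :
  par2_bracket (mono 1 2) (mono 2 1) - par2_bracket (mono 1 1) (mono 1 3)
  + par2_bracket (mono 1 1) (mono 3 1) =
  - 5%:R *: mono 1 4 + 5%:R *: mono 4 1.
Proof.
rewrite (@par2_bracket_mono 1 2 2 1 4 3 3 4) // (@par2_bracket_mono 1 1 1 3 2 4 4 4) //.
rewrite (@par2_bracket_mono 1 1 3 1 4 2 4 4) //.
malg_ring.
Qed.

Lemma cramer2_fst (R : comPzRingType) (V : lmodType R) (a b c d : R) (u v : V) :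
  (a * d - b * c) *: u = d *: (a *: u + b *: v) - b *: (c *: u + d *: v).
Proof.
by rewrite !scalerDr !scalerA opprD addrACA [b * d]mulrC subrr addr0 -scalerBl [d * a]mulrC.
Qed.

Lemma cramer2_snd (R : comPzRingType) (V : lmodType R) (a b c d : R) (u v : V) :
  (a * d - b * c) *: v = a *: (c *: u + d *: v) - c *: (a *: u + b *: v).
Proof.
by rewrite !scalerDr !scalerA opprD addrACA [c * a]mulrC subrr add0r -scalerBl [c * b]mulrC.
Qed.

Definition mono_swap (sw : bool) (a b : nat) : LPar2 := if sw then mono b a else mono a b.

(* In degree m + 6 all but the two end monomials cancel; degrees 4 and 5 need the separate
   identities above. *)
Definition ends_comb m sw : LPar2 :=
  par2_bracket (mono 1 1) (mono_swap sw 2 (m + 3))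
  + 2%:R *: par2_bracket (mono_swap sw 1 (m + 3)) (mono_swap sw 1 2)
  - (m + 3)%:R *: par2_bracket (mono 1 1) (mono_swap sw 1 (m + 4))
  - 2%:R *: par2_bracket (mono 1 1) (mono_swap sw (m + 4) 1).

Lemma ends_combE m sw :
  ends_comb m sw = - (m * m + 8 * m + 10)%:R *: mono_swap sw 1 (m + 5)
                  + - (m + 4)%:R *: mono_swap sw (m + 5) 1.
Proof.
rewrite /ends_comb; case: sw; rewrite /mono_swap /=.
- rewrite (@par2_bracket_mono 1 1 (m + 3) 2 (m + 4) 3 (m + 5) (m + 5)); [|lia..].
  rewrite (@par2_bracket_mono (m + 3) 1 2 1 (m + 5) (m + 4) (m + 5) 3); [|lia..].
  rewrite (@par2_bracket_mono 1 1 (m + 4) 1 (m + 5) 2 (m + 5) (m + 5)); [|lia..].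
  rewrite (@par2_bracket_mono 1 1 1 (m + 4) 2 (m + 5) (m + 5) (m + 5)); [|lia..].
  malg_ring.
- rewrite (@par2_bracket_mono 1 1 2 (m + 3) 3 (m + 4) (m + 5) (m + 5)); [|lia..].
  rewrite (@par2_bracket_mono 1 (m + 3) 1 2 (m + 4) (m + 5) 3 (m + 5)); [|lia..].
  rewrite (@par2_bracket_mono 1 1 1 (m + 4) 2 (m + 5) (m + 5) (m + 5)); [|lia..].
  rewrite (@par2_bracket_mono 1 1 (m + 4) 1 (m + 5) 2 (m + 5) (m + 5)); [|lia..].
  malg_ring.
Qed.

Section SubalgebraContainingGenerators.

Variable S : LPar2 -> Prop.
Hypothesis S_lie : lie_subalgebra S.

Lemma subalgD f g : S f -> S g -> S (f + g).
Proof. by case: S_lie => _ SD _ _; apply: SD. Qed.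

Lemma subalgZ (c : rat) f : S f -> S (c *: f).
Proof. by case: S_lie => _ _ SZ _; apply: SZ. Qed.

Lemma subalg_bracket f g : S f -> S g -> S (par2_bracket f g).
Proof. by case: S_lie => _ _ _ Sbr; apply: Sbr. Qed.

Lemma subalgB f g : S f -> S g -> S (f - g).
Proof. by move=> Sf Sg; rewrite -scaleN1r; apply: subalgD => //; apply: subalgZ. Qed.

Lemma subalgMn f n : S f -> S (f *+ n).
Proof. by rewrite -scaler_nat; apply: subalgZ. Qed.

Lemma subalg_of_scaled (c : rat) f g : c != 0 -> c *: f = g -> S g -> S f.
Proof. by move=> c_neq0 <- /(subalgZ c^-1); rewrite scalerA mulVf // scale1r. Qed.

Lemma subalg_solve2 (a b c d : rat) u v : a * d - b * c != 0 ->
  S (a *: u + b *: v) -> S (c *: u + d *: v) -> S u /\ S v.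
Proof.
move=> det_neq0 S1 S2; split.
- apply: (subalg_of_scaled det_neq0 (cramer2_fst a b c d u v)).
  by apply: subalgB; apply: subalgZ.
- apply: (subalg_of_scaled det_neq0 (cramer2_snd a b c d u v)).
  by apply: subalgB; apply: subalgZ.
Qed.

Definition mono_below n :=
  forall a b, (0 < a)%N -> (0 < b)%N -> (a + b < n)%N -> S (mono a b).

Local Ltac subalg_closure below :=
  repeat first [ assumption | apply: below; lia | apply: subalgB | apply: subalgD
               | apply: subalgZ | apply: subalgMn | apply: subalg_bracket ].

Lemma mono_chain_step n i : (0 < i)%N -> (i.+1 < n)%N -> mono_below n ->
  S (mono 1 n.-1) -> S (mono n.-1 1) -> S (mono i (n - i)) -> S (mono i.+1 (n - i.+1)).
Proof.
move=> i_gt0 lt_i1_n below S_1 S_top S_i.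
apply: (subalg_of_scaled (c := i%:R) (g := par2_bracket (mono 1 1) (mono i (n - i.+1))
          - mono i (n - i) *+ (n - i.+1) + (mono n.-1 1 + mono 1 n.-1))).
- by rewrite pnatr_eq0 -lt0n.
- by rewrite (@par2_bracket_mono 1 1 i (n - i.+1) i.+1 (n - i) n.-1 n.-1); [malg_ring|lia..].
- subalg_closure below.
Qed.

Lemma mono_chain n : mono_below n -> S (mono 1 n.-1) -> S (mono n.-1 1) ->
  forall i, (0 < i < n)%N -> S (mono i (n - i)).
Proof.
move=> below S_1 S_top; elim=> [//|[_ _|i IHi /andP[_ lt_i2_n]]]; first by rewrite subn1.
by apply: mono_chain_step => //; apply: IHi; lia.
Qed.

Hypotheses (S_11 : S (mono 1 1)) (S_21 : S (mono 2 1)) (S_12 : S (mono 1 2)).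
Hypothesis S_31_13 : S (mono 3 1 + mono 1 3).

Lemma mono_ends n : (1 < n)%N -> mono_below n -> S (mono 1 n.-1) /\ S (mono n.-1 1).
Proof.
case: n => [|[|n]] // _ below.
case: n below => [|[|[|[|m]]]] below; [by split | by split | | | ].
- apply: (subalg_solve2 (a := 1) (b := 1) (c := - 2%:R) (d := 2%:R)) => //.
    by rewrite !scale1r addrC.
  by rewrite -bracket_mono_deg4; subalg_closure below.
- apply: (subalg_solve2 (a := - 3%:R) (b := - 3%:R) (c := - 5%:R) (d := 5%:R)) => //.
    by rewrite -bracket_mono_deg5_sym; subalg_closure below.
  by rewrite -bracket_mono_deg5_antisym; subalg_closure below.
- have -> : m.+4.+2.-1 = m + 5 by lia.
  set c1 : rat := (m * m + 8 * m + 10)%:R; set c2 : rat := (m + 4)%:R.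
  apply: (subalg_solve2 (a := - c1) (b := - c2) (c := - c2) (d := - c1)).
  + have -> : - c1 * - c1 - - c2 * - c2 = ((m + 1) * (m + 2) * (m + 6) * (m + 7))%:R.
      by rewrite /c1 /c2 !natrM !natrD; ring.
    by rewrite pnatr_eq0; lia.
  + by rewrite -(ends_combE m false) /ends_comb /mono_swap /=; subalg_closure below.
  + by rewrite addrC -(ends_combE m true) /ends_comb /mono_swap /=; subalg_closure below.
Qed.

Lemma mono_below_succ n : mono_below n -> mono_below n.+1.
Proof.
move=> below a b a_gt0 b_gt0; rewrite ltnS leq_eqVlt => /orP[/eqP deg_ab|]; last exact: below.
have [|S_1 S_top] := mono_ends _ below; first by lia.
have -> : b = (n - a)%N by lia.
by apply: mono_chain => //; lia.
Qed.

Lemma subalg_mono a b : (0 < a)%N -> (0 < b)%N -> S (mono a b).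
Proof.
have below n : mono_below n by elim: n => [a' b' _ _|n]; [rewrite ltn0 | apply: mono_below_succ].
by move=> a_gt0 b_gt0; apply: (below (a + b).+1).
Qed.

End SubalgebraContainingGenerators.

Theorem corollary6p3 :
  lie_generated_by
    [:: basisv None; mono 1 1; mono 2 1; mono 1 2; mono 3 1 + mono 1 3].
Proof.
move=> S S_lie gen f.
have S_gen i : (i < 5)%N ->
    S (nth 0 [:: basisv None; mono 1 1; mono 2 1; mono 1 2; mono 3 1 + mono 1 3] i).
  by move=> lt_i5; apply/gen/mem_nth.
have S_basisv c : S (basisv c).
  case: c => [[a b]|]; last exact: (S_gen 0%N isT).
  exact: (subalg_mono S_lie (S_gen 1%N isT) (S_gen 2%N isT) (S_gen 3%N isT)
                         (S_gen 4%N isT) (ltn0Sn a) (ltn0Sn b)).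
case: S_lie => S0 SD SZ _.
rewrite (monalgE f); elim/big_ind: _ => // c _.
by rewrite scale_basisv; apply: SZ.
Qed.
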